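(* Let $\sigma:\mathbb R\to\mathbb R$ be a differentiable activation, $L\geq2$, and let $\mathrm{NN}'(\{m'_l\}_{l=0}^L)$ be a fully-connected network with $M_{\mathrm{wide}}$ parameters that is wider than a fully-connected network $\mathrm{NN}(\{m_l\}_{l=0}^L)$ with $M_{\mathrm{narr}}$ parameters (both with $m_L=m'_L=1$). Then for every function $f^*$ in the function space $\mathcal F_{\mathrm{narr}}$ of the narrower network, $O_{f_{\theta_{\mathrm{wide}}}}(f^* )\leq O_{f_{\theta_{\mathrm{narr}}}}(f^* )\leq M_{\mathrm{narr}}$, where $f_{\theta_{\mathrm{wide}}}$, $f_{\theta_{\mathrm{narr}}}$ denote the wider and the narrower network models.
   Context: A fully-connected network $\mathrm{NN}(\{m_l\}_{l=0}^L)$ with input dimension $m_0=d$ and output dimension $m_L=1$ has parameters $\theta=(W^{[1]},b^{[1]},\dots,W^{[L]},b^{[L]})$ with $W^{[l]}\in\mathbb R^{m_l\times m_{l-1}}$, $b^{[l]}\in\mathbb R^{m_l}$ (identified with a vector in $\mathbb R^M$, $M=\sum_{l=0}^{L-1}(m_l+1)m_{l+1}$), and output $f_\theta(x)=W^{[L]}f^{[L-1]}(x)+b^{[L]}$, where $f^{[0]}(x)=x$ and $f^{[l]}(x)=\sigma(W^{[l]}f^{[l-1]}(x)+b^{[l]})$ for $l\in[L-1]$ ($\sigma$ applied entrywise). Its function space is $\{f_\theta:\theta\in\mathbb R^M\}$. $\mathrm{NN}'(\{m'_l\}_{l=0}^L)$ is wider than $\mathrm{NN}(\{m_l\}_{l=0}^L)$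 if $m'_0=m_0$, $m'_L=m_L$, $m'_l\geq m_l$ for all $l\in[L-1]$, and $\sum_{l=1}^{L-1}(m'_l-m_l)>0$. The loss $\ell:\mathbb R\times\mathbb R\to[0,\infty)$ is continuously differentiable with $\ell(u,v)=0$ iff $u=v$. For a model $h_\theta$ with parameters in $\mathbb R^M$ and $f^*$ in its function space: the target set is $\mathcal M_{f^*}=\{\theta:h_\theta=f^*\}$; a dataset of size $n$ from $f^*$ is $\{(x_i,f^*(x_i))\}_{i=1}^n$ with empirical loss $\frac1n\sum_i\ell(u(x_i),f^*(x_i))$ for a function $u$ (identically $0$ if $n=0$); the tangent hyperplane at $\theta'$ is $\{h(\cdot;\theta')+a^\top\nabla_\theta h(\cdot;\theta'):a\in\mathbb R^M\}$; $f^*$ has $n$-sample LLR-guarantee if there exist a dataset of size $n$ from $f^*$ and $\theta'\in\mathcal M_{f^*}$ such that the set of minimizers of the empirical loss over the tangent hyperplane at $\theta'$ is exactly $\{f^*\}$; the optimistic sample size $O_h(f^* )$ is the smallest $n\geq0$ for which $f^*$ has $n$-sample LLR-guarantee. *)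

From HB Require Import structures.
From mathcomp Require Import all_boot all_order all_algebra.
From mathcomp Require Import all_classical all_reals all_analysis.
Set Implicit Arguments. Unset Strict Implicit. Unset Printing Implicit Defensive.
Import Order.TTheory GRing.Theory Num.Theory.
Import numFieldNormedType.Exports.
Local Open Scope ring_scope.

Section Defs.
Variable R : realType.

Definition loss_ok (loss : R -> R -> R) : Prop :=
  let lossU := fun z : R * R => loss z.1 z.2 in
  [/\ forall z : R * R, differentiable lossU z,
      continuous (fun z : R * R => 'D_(1, 0) lossU z),
      continuous (fun z : R * R => 'D_(0, 1) lossU z),
      (forall u v, 0 <= loss u v) &
      (forall u v, loss u v = 0 <-> u = v)].

(** Generic model h : R^P -> (R^d -> R) with a finite parameter index type P
    (so the parameter space is R^M with M = #|P|). *)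
Section Model.
Variables (d : nat) (P : finType).
Let Inp := 'I_d -> R.
Variable h : (P -> R) -> Inp -> R.

Definition partial (th : P -> R) (p : P) (x : Inp) : R :=
  derive1 (fun t : R => h (fun q => th q + (if q == p then t else 0)) x) 0.

Definition tangent (th' : P -> R) : set (Inp -> R) :=
  [set u | exists a : P -> R,
     u = fun x => h th' x + \sum_(p : P) a p * partial th' p x].

Definition target_set (fstar : Inp -> R) : set (P -> R) :=
  [set th | h th = fstar].

Definition emp_loss (loss : R -> R -> R) (fstar : Inp -> R) (n : nat)
  (xs : 'I_n -> Inp) (u : Inp -> R) : R :=
  if n == 0%N then 0
  else n%:R^-1 * \sum_(i < n) loss (u (xs i)) (fstar (xs i)).

Definition LLR_guarantee (loss : R -> R -> R) (fstar : Inp -> R) (n : nat) : Prop :=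
  exists (xs : 'I_n -> Inp) (th' : P -> R), target_set fstar th' /\
    forall u : Inp -> R,
      (tangent th' u /\ forall v, tangent th' v ->
          emp_loss loss fstar xs u <= emp_loss loss fstar xs v)
      <-> u = fstar.

Definition is_optimistic_size (loss : R -> R -> R) (fstar : Inp -> R) (n : nat) : Prop :=
  LLR_guarantee loss fstar n /\ forall k, (k < n)%N -> ~ LLR_guarantee loss fstar k.

End Model.

(** Fully-connected networks with widths m 0 = d, m 1, ..., m L = 1.
    Parameter index: a layer l < L (i.e. W^[l+1], b^[l+1]), a row i < m (l+1),
    and a column j <= m l, where column j = m l is the bias entry b^[l+1]_i. *)
Definition nn_param (L : nat) (m : nat -> nat) : finType :=
  {l : 'I_L & ('I_(m l.+1) * 'I_(m l).+1)%type}.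

Definition nn_num_params (L : nat) (m : nat -> nat) : nat :=
  (\sum_(l < L) (m l + 1) * m l.+1)%N.

Section Network.
Variables (sigma : R -> R) (d L : nat) (m : nat -> nat).

(** entry (i,j) of [W^[l+1] | b^[l+1]] as a function of nat indices (0 outside range) *)
Definition nn_entry (th : nn_param L m -> R) (l i j : nat) : R :=
  match @insub _ (fun k => (k < L)%N) 'I_L l with
  | Some lo =>
    match @insub _ (fun k => (k < m lo.+1)%N) 'I_(m lo.+1) i,
          @insub _ (fun k => (k < (m lo).+1)%N) 'I_(m lo).+1 j with
    | Some io, Some jo => th (Tagged (fun l0 : 'I_L => ('I_(m l0.+1) * 'I_(m l0).+1)%type) (io, jo))
    | _, _ => 0
    end
  | None => 0
  end.

Definition nn_input (x : 'I_d -> R) (j : nat) : R :=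
  match @insub _ (fun k => (k < d)%N) 'I_d j with Some jo => x jo | None => 0 end.

Definition nn_pre (th : nn_param L m -> R) (l : nat) (a : nat -> R) (i : nat) : R :=
  \sum_(j < m l) nn_entry th l i j * a j + nn_entry th l i (m l).

Fixpoint nn_hidden (th : nn_param L m -> R) (x : 'I_d -> R) (l : nat) : nat -> R :=
  match l with
  | 0 => nn_input x
  | l'.+1 => fun i => sigma (nn_pre th l' (nn_hidden th x l') i)
  end.

Definition nn_model (th : nn_param L m -> R) (x : 'I_d -> R) : R :=
  nn_pre th L.-1 (nn_hidden th x L.-1) 0.

Definition nn_function_space : set (('I_d -> R) -> R) :=
  [set f | exists th, nn_model th = f].

End Network.

Definition nn_arch (d L : nat) (m : nat -> nat) : Prop :=
  [/\ m 0%N = d, m L = 1%N & forall l, (l <= L)%N -> (0 < m l)%N].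

Definition wider (L : nat) (m' m : nat -> nat) : Prop :=
  [/\ m' 0%N = m 0%N, m' L = m L,
      (forall l, (1 <= l <= L.-1)%N -> (m l <= m' l)%N) &
      (0 < \sum_(1 <= l < L) (m' l - m l))%N].

End Defs.

Arguments nn_model {R} sigma d L m th x.
Arguments nn_function_space {R} sigma d L m _.
Arguments is_optimistic_size {R d P} h loss fstar n.

From HB Require Import structures.
From mathcomp Require Import all_boot all_order all_algebra.
From mathcomp Require Import all_classical all_reals all_analysis.
Set Implicit Arguments. Unset Strict Implicit. Unset Printing Implicit Defensive.
Import Order.TTheory GRing.Theory Num.Theory.
Local Open Scope ring_scope.

(* Embed narrow parameters into the wide architecture by letting every extra hidden
   neuron copy the incoming weights of neuron 0 of its layer and giving it zero
   outgoing weights.  The wide network then computes the same function, and its tangent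
   hyperplane at the embedded point is the narrow one: perturbing an outgoing weight of
   a copy has the same first-order effect as perturbing that of neuron 0, perturbing its
   incoming weights has none.  Hence every LLR guarantee of the narrow model is one of
   the wide model.  The bound by the number M of parameters holds because the tangent
   hyperplane is spanned by M functions, so at most M points are unisolvent for their
   span, and on such points a tangent function of zero empirical loss must be f*. *)

Lemma exists_minimal_le (Q : nat -> Prop) n0 : Q n0 ->
  exists n, [/\ Q n, (forall k, (k < n)%N -> ~ Q k) & (n <= n0)%N].
Proof.
move=> Qn0; have exQ : exists n, `[< Q n >] by exists n0; apply/asboolP.
case: (ex_minnP exQ) => n /asboolP Qn min_n; exists n; split => //.
- by move=> k ltkn Qk; have := min_n k (asboolT Qk); rewrite leqNgt ltkn.
- exact/min_n/asboolP.
Qed.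

Section Unisolvent.
Variables (R : realType) (X : Type).

Definition unisolvent (P : finType) (phi : P -> X -> R) n (xs : 'I_n -> X) :=
  forall a : P -> R, (forall i, \sum_p a p * phi p (xs i) = 0) ->
    forall x, \sum_p a p * phi p x = 0.

Section Ordinal.
Variables (k : nat) (phi : 'I_k -> X -> R).

Definition eval_mx n (xs : 'I_n -> X) : 'M[R]_(n, k) := \matrix_(i, p) phi p (xs i).

Definition snoc_pts n (xs : 'I_n -> X) (x : X) (i : 'I_(n + 1)) : X :=
  if fintype.split i is inl i' then xs i' else x.

Lemma eval_mx_snoc n (xs : 'I_n -> X) x :
  eval_mx (snoc_pts xs x) = col_mx (eval_mx xs) (\row_p phi p x).
Proof.
apply/matrixP => i p; rewrite !mxE /snoc_pts.
by case: splitP => i' _; rewrite !mxE.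
Qed.

Lemma rank_eval_mx_snoc n (xs : 'I_n -> X) x :
  ~~ (\row_p phi p x <= eval_mx xs)%MS ->
  (\rank (eval_mx xs) < \rank (eval_mx (snoc_pts xs x)))%N.
Proof.
move=> notin; rewrite eval_mx_snoc -addsmxE; apply: rank_ltmx.
rewrite ltmxE addsmxSl /=; apply: contra notin => sub.
exact: submx_trans (addsmxSr _ _) sub.
Qed.

Lemma unisolvent_of_row_span n (xs : 'I_n -> X) :
  (forall x, (\row_p phi p x <= eval_mx xs)%MS) -> unisolvent phi xs.
Proof.
move=> span a a0 x; have [D DE] := submxP (span x).
have A0 : eval_mx xs *m (\col_p a p) = 0.
  apply/matrixP => i j; rewrite !mxE -[RHS](a0 i).
  by apply: eq_bigr => p _; rewrite !mxE mulrC.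
have := congr1 (fun M : 'rV[R]_k => (M *m \col_p a p) ord0 ord0) DE.
rewrite /= -mulmxA A0 mulmx0 !mxE => E0; rewrite -[RHS]E0.
by apply: eq_bigr => p _; rewrite !mxE mulrC.
Qed.

Lemma exists_unisolvent_ord :
  exists n (xs : 'I_n -> X), (n <= k)%N /\ unisolvent phi xs.
Proof.
pose indep_pts n := `[< exists xs : 'I_n -> X, \rank (eval_mx xs) = n >].
have indep0 : indep_pts 0%N.
  apply/asboolP; exists (fun i : 'I_0 => False_rect X (notF (ltn_ord i))).
  by apply/eqP; rewrite -leqn0 rank_leq_row.
have indep_le n : indep_pts n -> (n <= k)%N.
  by move=> /asboolP[xs <-]; apply: rank_leq_col.
have ex_indep : exists n, indep_pts n by exists 0%N.
case: (ex_maxnP ex_indep indep_le) => n /asboolP[xs rk] max_n.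
exists n, xs; split; first by rewrite -rk rank_leq_col.
apply: unisolvent_of_row_span => x; apply/negPn/negP => notin.
have : indep_pts (n + 1)%N.
  apply/asboolP; exists (snoc_pts xs x); apply/eqP.
  rewrite eqn_leq rank_leq_row /= [X in (X <= _)%N]addn1 -{1}rk.
  exact: rank_eval_mx_snoc.
by move=> /max_n; rewrite addn1 ltnn.
Qed.

End Ordinal.

Lemma exists_unisolvent (P : finType) (phi : P -> X -> R) :
  exists n (xs : 'I_n -> X), (n <= #|P|)%N /\ unisolvent phi xs.
Proof.
have [n [xs [le_n uni]]] := exists_unisolvent_ord (fun i : 'I_#|P| => phi (enum_val i)).
exists n, xs; split => // a a0 x.
have := uni (fun i => a (enum_val i)) _ x.
rewrite -(big_enum_val (A := P) (fun p => a p * phi p x)) => -> // i.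
by have := a0 i; rewrite (big_enum_val (A := P) (fun p => a p * phi p (xs i))).
Qed.

End Unisolvent.

Section LLRGuarantee.
Variables (R : realType) (d : nat) (P : finType).
Variable h : (P -> R) -> ('I_d -> R) -> R.
Variables (loss : R -> R -> R) (fstar : ('I_d -> R) -> R).
Hypothesis loss_ge0 : forall u v, 0 <= loss u v.
Hypothesis loss_eq0 : forall u v, loss u v = 0 <-> u = v.

Lemma emp_loss_ge0 n (xs : 'I_n -> 'I_d -> R) u : 0 <= emp_loss loss fstar xs u.
Proof.
rewrite /emp_loss; case: ifP => // _.
by rewrite mulr_ge0 ?invr_ge0 ?ler0n ?sumr_ge0.
Qed.

Lemma emp_loss_target n (xs : 'I_n -> 'I_d -> R) : emp_loss loss fstar xs fstar = 0.
Proof.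
rewrite /emp_loss; case: ifP => // _.
by rewrite big1 ?mulr0 // => i _; apply/loss_eq0.
Qed.

Lemma emp_loss_le0 n (xs : 'I_n -> 'I_d -> R) u :
  emp_loss loss fstar xs u <= 0 -> forall i, u (xs i) = fstar (xs i).
Proof.
move=> le0 i; have n_gt0 : (0 < n)%N by apply: leq_ltn_trans (ltn_ord i).
have sum0 : \sum_(j < n) loss (u (xs j)) (fstar (xs j)) = 0.
  apply/eqP; rewrite eq_le sumr_ge0 // andbT.
  by move: le0; rewrite /emp_loss eqn0Ngt n_gt0 pmulr_rle0 // invr_gt0 ltr0n.
exact/loss_eq0/(psumr_eq0P (fun j _ => loss_ge0 _ _) sum0).
Qed.

Lemma tangent_base th : tangent h th (h th).
Proof.
exists (fun=> 0); apply/funext => x.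
by rewrite big1 ?addr0 // => p _; rewrite mul0r.
Qed.

Lemma LLR_guarantee_of_unisolvent th n (xs : 'I_n -> 'I_d -> R) :
  h th = fstar -> unisolvent (partial h th) xs -> LLR_guarantee h loss fstar n.
Proof.
move=> h_th uni; exists xs, th; split => // u; split; last first.
  move=> ->; split; first by rewrite -h_th; apply: tangent_base.
  by move=> v _; rewrite emp_loss_target emp_loss_ge0.
move=> [[a ->] u_min].
have := u_min _ (tangent_base th); rewrite h_th emp_loss_target.
move=> /emp_loss_le0 agree; apply/funext => x.
rewrite (uni a) ?addr0 ?h_th // => i.
by move: (agree i) => /(canRL (addKr _)); rewrite addNr.
Qed.

Lemma LLR_guarantee_le_card th : h th = fstar ->
  exists n, (n <= #|P|)%N /\ LLR_guarantee h loss fstar n.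
Proof.
move=> h_th; have [n [xs [le_n uni]]] := exists_unisolvent (partial h th).
by exists n; split => //; apply: LLR_guarantee_of_unisolvent uni.
Qed.

End LLRGuarantee.

Section Reparametrization.
Variables (R : realType) (d : nat) (P1 P2 : finType).
Variable h1 : (P1 -> R) -> ('I_d -> R) -> R.
Variable h2 : (P2 -> R) -> ('I_d -> R) -> R.

Lemma tangent_eq_reindex th1 th2 (g : P2 -> option P1) (e : P1 -> P2) :
  h2 th2 = h1 th1 ->
  (forall q x, partial h2 th2 q x = oapp (partial h1 th1 ^~ x) 0 (g q)) ->
  (forall p, g (e p) = Some p) ->
  tangent h2 th2 = tangent h1 th1.
Proof.
move=> h_eq partial_eq geK; apply/seteqP; split => u [a ->].
- exists (fun p => \sum_(q | g q == Some p) a q); apply/funext => x.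
  rewrite h_eq; congr (_ + _).
  under [RHS]eq_bigr => p _ do rewrite mulr_suml big_mkcond.
  rewrite exchange_big /=; apply: eq_bigr => q _; rewrite partial_eq.
  case: (g q) => [p0|] /=; last by rewrite mulr0 big1.
  rewrite (bigD1 p0) //= eqxx big1 ?addr0 // => p ne_p.
  by case: eqP => // -[] E; rewrite E eqxx in ne_p.
- exists (fun q => \sum_(p | e p == q) a p); apply/funext => x.
  rewrite h_eq /=; congr (_ + _); apply/esym.
  under eq_bigr => q _ do rewrite mulr_suml big_mkcond.
  rewrite exchange_big /=; apply: eq_bigr => p _.
  rewrite (bigD1 (e p)) //= eqxx big1 ?addr0; first by rewrite partial_eq geK.
  by move=> q ne_q; case: eqP => // E; rewrite E eqxx in ne_q.
Qed.

Lemma LLR_guarantee_transfer loss fstar n :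
  (forall th1, h1 th1 = fstar ->
     exists th2, h2 th2 = fstar /\ tangent h2 th2 = tangent h1 th1) ->
  LLR_guarantee h1 loss fstar n -> LLR_guarantee h2 loss fstar n.
Proof.
move=> transfer [xs [th1 [h_th1 llr]]].
have [th2 [h_th2 tan_eq]] := transfer th1 h_th1.
by exists xs, th2; split => //; rewrite tan_eq.
Qed.

End Reparametrization.

Definition perturb (R : realType) (P : eqType) (th : P -> R) (p : P) (t : R) : P -> R :=
  fun q => th q + (if q == p then t else 0).

Lemma partialE (R : realType) d (P : finType) (h : (P -> R) -> ('I_d -> R) -> R) th p x :
  partial h th p x = derive1 (fun t => h (perturb th p t) x) 0.
Proof. by []. Qed.

Section Coordinates.
Variables (R : realType) (L : nat) (mm : nat -> nat).
Local Notation P := (nn_param L mm).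

Definition nn_index (l i j : nat) : option P :=
  match @insub _ (fun k => (k < L)%N) 'I_L l with
  | Some lo =>
    match @insub _ (fun k => (k < mm lo.+1)%N) 'I_(mm lo.+1) i,
          @insub _ (fun k => (k < (mm lo).+1)%N) 'I_(mm lo).+1 j with
    | Some io, Some jo =>
        Some (Tagged (fun l0 : 'I_L => ('I_(mm l0.+1) * 'I_(mm l0).+1)%type) (io, jo))
    | _, _ => None
    end
  | None => None
  end.

Definition nn_coords (q : P) : nat * nat * nat :=
  ((tag q : nat), ((tagged q).1 : nat), ((tagged q).2 : nat)).

Lemma nn_entryE (th : P -> R) l i j : nn_entry th l i j = oapp th 0 (nn_index l i j).
Proof.
rewrite /nn_entry /nn_index; case: (insub l) => [lo|] //.
by case: (@insub _ (fun k => (k < mm lo.+1)%N) 'I_(mm lo.+1) i) => [io|];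
  case: (@insub _ (fun k => (k < (mm lo).+1)%N) 'I_(mm lo).+1 j) => [jo|].
Qed.

Lemma nn_coordsK q : nn_index (nn_coords q).1.1 (nn_coords q).1.2 (nn_coords q).2 = Some q.
Proof. by case: q => lo [io jo]; rewrite /nn_index /nn_coords /= !valK. Qed.

Lemma nn_index_some l i j q : nn_index l i j = Some q -> nn_coords q = (l, i, j).
Proof.
rewrite /nn_index; case: insubP => [lo _ <-|] //.
case: insubP => [io _ <-|]; last first.
  by case: (@insub _ (fun k => (k < (mm lo).+1)%N) 'I_(mm lo).+1 j).
by case: insubP => [jo _ <- [<-]|].
Qed.

Lemma nn_index_in_range l i j : (l < L)%N -> (i < mm l.+1)%N -> (j <= mm l)%N ->
  exists q, nn_index l i j = Some q.
Proof.
move=> lt_l lt_i le_j; pose lo := Ordinal lt_l.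
pose q := Tagged (fun l0 : 'I_L => ('I_(mm l0.+1) * 'I_(mm l0).+1)%type)
   (Ordinal (lt_i : (i < mm lo.+1)%N), Ordinal (le_j : (j < (mm lo).+1)%N)).
by exists q; apply: (nn_coordsK q).
Qed.

Lemma nn_index_eqE l i j p : (nn_index l i j == Some p) = (nn_coords p == (l, i, j)).
Proof.
case E: (nn_index l i j) => [q|].
  apply/eqP/eqP => [[<-]|p_lij]; first exact: nn_index_some.
  by rewrite -E -nn_coordsK p_lij.
by apply/esym/negbTE/eqP => p_lij; have := nn_coordsK p; rewrite p_lij E.
Qed.

Lemma nn_entry_perturb (th : P -> R) p t l i j :
  nn_entry (perturb th p t) l i j =
  nn_entry th l i j + (if nn_coords p == (l, i, j) then t else 0).
Proof.
by rewrite !nn_entryE -nn_index_eqE; case: (nn_index l i j) => [q|] /=; rewrite ?addr0.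
Qed.

Lemma nn_entry_of_coords (F : nat -> nat -> nat -> R) l i j :
  (l < L)%N -> (i < mm l.+1)%N -> (j <= mm l)%N ->
  nn_entry (fun q => F (nn_coords q).1.1 (nn_coords q).1.2 (nn_coords q).2) l i j = F l i j.
Proof.
move=> lt_l lt_i le_j; have [q qE] := nn_index_in_range lt_l lt_i le_j.
by rewrite nn_entryE qE /oapp (nn_index_some qE).
Qed.

(* Column [mm k] holds the biases, which multiply the constant input [1]. *)
Definition with_bias (k : nat) (a : nat -> R) (j : nat) : R :=
  if (j < mm k)%N then a j else 1.

Lemma nn_pre_with_bias (th : P -> R) k a i :
  nn_pre th k a i = \sum_(j < (mm k).+1) nn_entry th k i j * with_bias k a j.
Proof.
rewrite /nn_pre big_ord_recr /= /with_bias ltnn mulr1; congr (_ + _).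
by apply: eq_bigr => j _; rewrite ltn_ord.
Qed.

Lemma nn_pre_perturb (th : P -> R) p t k a i :
  nn_pre (perturb th p t) k a i = nn_pre th k a i +
  (if (k == (nn_coords p).1.1) && (i == (nn_coords p).1.2)
   then t * with_bias k a (nn_coords p).2 else 0).
Proof.
rewrite !nn_pre_with_bias.
under eq_bigr => j _ do rewrite nn_entry_perturb mulrDl.
rewrite big_split /=; congr (_ + _).
case: ifP => [/andP[/eqP kE /eqP iE]|ne].
  have lt_j : ((nn_coords p).2 < (mm k).+1)%N by rewrite kE /nn_coords /= ltn_ord.
  rewrite (bigD1 (Ordinal lt_j)) //= big1 ?addr0.
    by rewrite kE iE /nn_coords /= eqxx mulrC.
  move=> j ne_j; case: ifP => [/eqP jE|]; last by rewrite mul0r.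
  by case/eqP: ne_j; apply: val_inj; rewrite /= -[RHS]/((nn_coords p).2) jE.
rewrite big1 // => j _; case: ifP => [/eqP jE|]; last by rewrite mul0r.
have kE := congr1 (fun c => c.1.1) jE; have iE := congr1 (fun c => c.1.2) jE.
rewrite /= in kE iE; case/negP: (negbT ne).
by apply/andP; split; apply/eqP; rewrite ?kE ?iE.
Qed.

End Coordinates.

Section Widening.
Variables (R : realType) (sigma : R -> R) (d L : nat) (m m' : nat -> nat).
Hypothesis m'0 : m' 0%N = m 0%N.
Hypothesis mL : m L = 1%N.
Hypothesis le_m : forall l, (l <= L)%N -> (m l <= m' l)%N.
Hypothesis m_gt0 : forall l, (l <= L)%N -> (0 < m l)%N.
Hypothesis L_gt0 : (0 < L)%N.

Lemma le_m_lt l : (l < L)%N -> (m l <= m' l)%N.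
Proof. by move/ltnW/le_m. Qed.

Local Notation P := (nn_param L m).
Local Notation P' := (nn_param L m').

(* Every extra neuron of the wide network copies the incoming weights of neuron [0]
   and has zero outgoing weights. *)
Definition widen_entry (th : P -> R) (l i j : nat) : R :=
  let i0 := if (i < m l.+1)%N then i else 0%N in
  if (j < m l)%N then nn_entry th l i0 j
  else if j == m' l then nn_entry th l i0 (m l) else 0.

Definition widen_param (th : P -> R) : P' -> R :=
  fun q => widen_entry th (nn_coords q).1.1 (nn_coords q).1.2 (nn_coords q).2.

Lemma nn_pre_widen th k a' a i : (k < L)%N -> (i < m' k.+1)%N ->
  (forall j, (j < m k)%N -> a' j = a j) ->
  nn_pre (widen_param th) k a' i = nn_pre th k a (if (i < m k.+1)%N then i else 0%N).
Proof.
move=> lt_k lt_i a'E; rewrite /nn_pre /widen_param.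
have le_mk := le_m_lt lt_k.
under eq_bigr => j _ do
  rewrite nn_entry_of_coords // 1?ltnW // /widen_entry (ltn_eqF (ltn_ord j)).
rewrite nn_entry_of_coords // /widen_entry [(m' k < m k)%N]ltnNge le_mk /= eqxx; congr (_ + _).
rewrite (big_ord_widen _ (fun j => nn_entry th k _ j * a j) le_mk) [RHS]big_mkcond.
by apply: eq_bigr => j _; case: ifP => lt_j; rewrite ?mul0r ?a'E.
Qed.

(* [kd] is the layer whose extra neurons must reproduce neuron [0] of the narrow
   network; elsewhere they may compute anything.  Layer 0 has no extra neurons, so
   [kd = 0] imposes no constraint. *)
Lemma nn_model_simulate (th' : P' -> R) (th : P -> R) x kd :
  (forall k a' a, (k < L)%N -> (forall j, (j < m k)%N -> a' j = a j) ->
     (k == kd -> forall j, (m k <= j < m' k)%N -> a' j = a 0%N) ->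
     forall i, (i < m k.+1)%N -> nn_pre th' k a' i = nn_pre th k a i) ->
  ((0 < kd)%N -> (kd < L)%N ->
     forall a' a, (forall j, (j < m kd.-1)%N -> a' j = a j) ->
     forall i, (m kd <= i < m' kd)%N -> nn_pre th' kd.-1 a' i = nn_pre th kd.-1 a 0%N) ->
  nn_model sigma d L m' th' x = nn_model sigma d L m th x.
Proof.
move=> pre_eq pre_dup.
have hidden_eq k : (k <= L.-1)%N ->
   (forall j, (j < m k)%N -> nn_hidden sigma th' x k j = nn_hidden sigma th x k j) /\
   (k == kd -> forall j, (m k <= j < m' k)%N ->
      nn_hidden sigma th' x k j = nn_hidden sigma th x k 0%N).
  elim: k => [_|k IH lt_k].
    by split => // _ j; rewrite m'0 => /andP[le_j lt_j]; rewrite ltnNge le_j in lt_j.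
  have lt_kL : (k < L)%N by apply: leq_trans lt_k (leq_pred _).
  have [IHeq IHdup] := IH (ltnW lt_k).
  split=> [j lt_j|/eqP kdE j j_new] /=; congr (sigma _); first exact: pre_eq.
  have lt_k1 : (k.+1 < L)%N by rewrite -ltn_predRL.
  by move: pre_dup; rewrite -kdE => /(_ isT lt_k1); apply.
have [hid_eq hid_dup] := hidden_eq L.-1 (leqnn _).
by apply: pre_eq; rewrite ?prednK ?mL // ltn_predL.
Qed.

Lemma nn_model_widen th : nn_model sigma d L m' (widen_param th) = nn_model sigma d L m th.
Proof.
apply/funext => x; apply: (@nn_model_simulate _ _ x 0%N) => // k a' a lt_k a'E _ i lt_i.
by rewrite (nn_pre_widen _ _ _ a'E) ?lt_i // (leq_trans lt_i (le_m lt_k)).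
Qed.

Definition narrow_col (l : 'I_L) (j : nat) : nat :=
  if (j < m l)%N then j else if j == m' l then m l else 0%N.

Lemma narrow_col_le l j : (narrow_col l j <= m l)%N.
Proof. by rewrite /narrow_col; case: ifP => [/ltnW //|_]; case: ifP. Qed.

(* Outgoing weights of an extra neuron act like those of neuron [0], whose
   activation it copies; incoming weights of an extra neuron have no effect. *)
Definition narrow_index (q : P') : option P :=
  match @insub _ (fun k => (k < m (tag q).+1)%N) 'I_(m (tag q).+1) (tagged q).1 with
  | Some io => Some (Tagged (fun l0 : 'I_L => ('I_(m l0.+1) * 'I_(m l0).+1)%type)
                      (io, inord (narrow_col (tag q) (tagged q).2)))
  | None => None
  end.

Definition widen_index (p : P) : P' :=
  Tagged (fun l0 : 'I_L => ('I_(m' l0.+1) * 'I_(m' l0).+1)%type)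
    (widen_ord (le_m (ltn_ord (tag p))) (tagged p).1,
     inord (if ((tagged p).2 < m (tag p))%N then nat_of_ord (tagged p).2 else m' (tag p))).

Lemma widen_indexK p : narrow_index (widen_index p) = Some p.
Proof.
case: p => l [i j]; rewrite /narrow_index /widen_index /= valK.
set j' : 'I_(m' l).+1 := inord _.
suff -> : inord (narrow_col l j') = j :> 'I_(m l).+1 by [].
apply: val_inj; have le_ml := le_m_lt (ltn_ord l).
have le_j : (j <= m l)%N by rewrite -ltnS.
rewrite /= inordK ?ltnS ?narrow_col_le // inordK; last first.
  by case: ifP => // _; rewrite ltnS (leq_trans le_j).
rewrite /narrow_col; case: (ltnP j (m l)) => [-> //|ge_j].
by rewrite ltnNge le_ml /= eqxx; apply/eqP; rewrite eqn_leq le_j ge_j.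
Qed.

Lemma nn_model_widen_perturb th q t :
  nn_model sigma d L m' (perturb (widen_param th) q t) =
  oapp (fun p => nn_model sigma d L m (perturb th p t)) (nn_model sigma d L m th)
    (narrow_index q).
Proof.
apply/funext => x; case: q => ql [qi qj]; rewrite /narrow_index /=.
case: insubP => [io lt_qi ioE|ge_qi] /=.
- apply: (@nn_model_simulate _ _ x ql).
  + move=> k a' a lt_k a'E a'dup i lt_i.
    rewrite !nn_pre_perturb (nn_pre_widen _ _ _ a'E) ?lt_i //; last first.
      exact: leq_trans lt_i (le_m lt_k).
    congr (_ + _); rewrite /nn_coords /= ioE.
    case: ifP => // /andP[/eqP kE _]; congr (_ * _).
    rewrite inordK ?ltnS ?narrow_col_le //.
    move: a'dup a'E; rewrite kE eqxx => a'dup a'E.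
    have le_qj : (qj <= m' ql)%N by rewrite -ltnS ltn_ord.
    rewrite /with_bias /narrow_col; case: (ltnP qj (m ql)) => lt_qj.
      have lt_qj' := leq_trans lt_qj (le_m_lt (ltn_ord ql)).
      by rewrite lt_qj lt_qj' a'E.
    case: eqP => [->|ne_qj]; first by rewrite !ltnn.
    have lt_qj' : (qj < m' ql)%N by rewrite ltn_neqAle le_qj andbT; apply/eqP.
    by rewrite lt_qj' m_gt0 1?ltnW // a'dup ?lt_qj.
  + move=> ql_gt0 _ a' a a'E i /andP[ge_i lt_i].
    have ne_ql : ql.-1 != ql by rewrite neq_ltn ltn_predL ql_gt0.
    rewrite !nn_pre_perturb /nn_coords /= (negbTE ne_ql) /= !addr0.
    by rewrite (nn_pre_widen _ _ _ a'E) ?prednK // ?ltnNge ?ge_i // ltnW.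
- apply: (@nn_model_simulate _ _ x 0%N) => // k a' a lt_k a'E _ i lt_i.
  rewrite nn_pre_perturb (nn_pre_widen _ _ _ a'E) ?lt_i //; last first.
    exact: leq_trans lt_i (le_m lt_k).
  rewrite /nn_coords /=; case: ifP => [/andP[/eqP kE /eqP iE]|]; last by rewrite addr0.
  by move: lt_i; rewrite iE kE (negbTE ge_qi).
Qed.

Lemma partial_widen th q x :
  partial (nn_model sigma d L m') (widen_param th) q x =
  oapp (partial (nn_model sigma d L m) th ^~ x) 0 (narrow_index q).
Proof.
rewrite !partialE; under eq_fun => t do rewrite nn_model_widen_perturb.
by case: (narrow_index q) => [p|] //=; rewrite derive1_cst.
Qed.

Lemma tangent_widen th :
  tangent (nn_model sigma d L m') (widen_param th) = tangent (nn_model sigma d L m) th.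
Proof.
apply: (tangent_eq_reindex (g := narrow_index) (e := widen_index)).
- exact: nn_model_widen.
- exact: partial_widen.
- exact: widen_indexK.
Qed.

End Widening.

Lemma card_nn_param L m : #|nn_param L m| = nn_num_params L m.
Proof.
rewrite card_tagged /nn_num_params sumnE big_map big_enum /=.
by apply: eq_bigr => l _; rewrite card_prod !card_ord mulnC addn1.
Qed.

Lemma wider_le L m' m : wider L m' m -> forall l, (l <= L)%N -> (m l <= m' l)%N.
Proof.
case=> m'0 m'L le_mid _ l le_l.
have [->|l_gt0] := posnP l; first by rewrite m'0.
have [lt_l|ge_l] := ltnP l L.
  by apply: le_mid; rewrite l_gt0 -ltnS prednK // (leq_ltn_trans _ lt_l).
have -> : l = L by apply/eqP; rewrite eqn_leq le_l ge_l.
by rewrite m'L.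
Qed.

Unset Implicit Arguments.

Theorem mainTheorem11 (R : realType) (sigma : R -> R) (loss : R -> R -> R)
  (d L : nat) (m m' : nat -> nat)
  (Hsigma : forall x : R, derivable sigma x 1)
  (Hloss : loss_ok loss)
  (HL : (2 <= L)%N)
  (Harch : nn_arch d L m) (Harch' : nn_arch d L m')
  (Hwider : wider L m' m) :
  forall fstar : ('I_d -> R) -> R,
    nn_function_space sigma d L m fstar ->
    exists nw nn : nat,
      [/\ is_optimistic_size (nn_model sigma d L m') loss fstar nw,
          is_optimistic_size (nn_model sigma d L m) loss fstar nn &
          (nw <= nn <= nn_num_params L m)%N].
Proof.
move=> fstar [th th_fstar].
have [_ _ _ loss_ge0 loss_eq0] := Hloss.
have [_ mL m_gt0] := Harch; have [m'0 _ _ _] := Hwider.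
have le_m := wider_le Hwider; have L_gt0 : (0 < L)%N := ltnW HL.
have [n0 [le_n0 llr_n0]] := LLR_guarantee_le_card loss_ge0 loss_eq0 th_fstar.
have [nn [llr_nn min_nn le_nn]] := exists_minimal_le llr_n0.
have llr_wide : LLR_guarantee (nn_model sigma d L m') loss fstar nn.
  apply: (LLR_guarantee_transfer _ llr_nn) => th1 th1_fstar.
  exists (widen_param (m' := m') th1).
  rewrite (nn_model_widen _ _ m'0 mL le_m L_gt0).
  by rewrite (tangent_widen _ _ m'0 mL le_m m_gt0 L_gt0).
have [nw [llr_nw min_nw le_nw]] := exists_minimal_le llr_wide.
exists nw, nn; split => //.
by rewrite le_nw -card_nn_param (leq_trans le_nn le_n0).
Qed.
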